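(* Let $t<n$, let $\mathcal{E}$ be an information exchange and $P$ a decision protocol for the hard crash failures context $(\mathcal{E},\mathit{Crash}_t)$ such that SBA($\mathcal{N}$) is valid in $\mathcal{I}_{P,\mathcal{E},\mathit{Crash}_t}$. Then for every agent $i$ and value $v$, the formulas $\mathtt{decides}_i(v)\Rightarrow C_{\mathcal{A}}(\mathtt{decides}_{\mathcal{A}}(v))$ and $\mathtt{decides}_i(v)\Rightarrow C_{\mathcal{A}}(\exists v)$ are valid in $\mathcal{I}_{P,\mathcal{E},\mathit{Crash}_t}$.
   Context: Agents $\mathrm{Agt}=\{1,\dots,n\}$; decision values $V$; actions $A_i=\{\mathtt{noop}\}\cup\{\mathtt{decide}_i(v):v\in V\}$. An information exchange $\mathcal{E}$ gives each agent $i$ a tuple $(L_i,I_i,M_i,\mu_i,\delta_i)$: local states $L_i$ of the form $\langle\mathit{init}_i,\mathit{time}_i,\dots\rangle$ ($\mathit{init}_i\in V$ the initial preference) together with a distinguished state $\mathit{crashed}$; initial states $I_i\subseteq L_i$; messages $M_i\ni\bot$ ($\bot$ = no message); $\mu_i:L_i\times A_i\to(\mathrm{Agt}\to M_i)$; $\delta_i:L_i\times A_i\times\prod_jM_j\to L_i$, preserving $\mathit{init}_i$ and incrementing $\mathit{time}_i$. A decision protocol is $P=(P_i:L_i\to A_i)_i$; in the hard crash model $P_i(\mathit{crashed})=\mathtt{noop}$. A failure model $(L^*_e,I_e,\delta_e,\mathit{Adv})$ has environment states, initial ones, update $\delta_e:L^*_e\times\prod_iA_i\to L^*_e$, and adversaries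 $(\Delta^t,\Delta^r,\Delta^s)$ with $\Delta^t,\Delta^r:\mathbb{N}\times\mathrm{Agt}\times\mathrm{Agt}\times\bigcup_iM_i\to\bigcup_iM_i$, $\Delta^s_i:\mathbb{N}\times L_i\to L_i$. Runs $r$ of $\mathcal{I}_{P,\mathcal{E},\mathcal{F}}$: $r(0)=((s_e,\alpha),s_1,\dots,s_n)$ with $s_e\in I_e$, $\alpha\in\mathit{Adv}$, $s_i\in I_i$; from $r(k)=((s_e,\alpha),s_1,\dots,s_n)$, $r(k+1)=((\delta_e(s_e,(a_1,\dots,a_n)),\alpha),s'_1,\dots,s'_n)$ with $a_i=P_i(s_i)$ (action of $i$ at time $k$), $m_{i,j}=\mu_i(s_i,a_i)(j)$, $m'_{i,j}=\Delta^r(k,i,j,\Delta^t(k,i,j,m_{i,j}))$, $s^*_j=\delta_j(s_j,a_j,(m'_{1,j},\dots,m'_{n,j}))$, $s'_j=\Delta^s_j(k,s^*_j)$. $r_i(m)$ is $i$'s local state at time $m$. $\mathit{Crash}_t$: adversaries in which at most $t$ agents crash; $\Delta^r(k,i,j,m)=m$ always; an agent $i$ crashing in round $k+1$ has $\Delta^s_i(k',s)=\mathit{crashed}$ for all $s$ and $k'\ge k$, some $J\subseteq\mathrm{Agt}$ with $\Delta^t(k,i,j,m)=\bot$ for $j\in J$ and $=m$ for $j\notin J$, and $\Delta^t(k',i,j,m)=\bot$ for all $j$, $k'>k$; otherwise $\Delta^s_i$ and $\Delta^t(\cdot,i,\cdot,\cdot)$ act as identity. An agent has a fault in a round if its sent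 messages are altered by $\Delta^t$, its received messages altered by $\Delta^r$, or its updated state altered by $\Delta^s_i$. $\mathcal{N}(r,m)$ = agents with no fault in any round of $r$; $\mathcal{A}(r,m)$ = agents with no fault in rounds $1..m$. Formulas: $\mathtt{decides}_i(v)$ holds at $(r,m)$ iff $P_i(r_i(m))=\mathtt{decide}_i(v)$; $\exists v$ holds at $(r,m)$ iff some agent's $\mathit{init}$ in $r$ is $v$; $\mathtt{decides}_S(v):=\bigwedge_{i\in S}\mathtt{decides}_i(v)$. $(r,m)\sim_i(r',m')$ iff $r_i(m)=r'_i(m')$; $K_i\phi$ holds iff $\phi$ holds at all $\sim_i$-related points; for an indexical set $S$ (assignment of a set of agents to each point), $E_S\phi=\bigwedge_{i\in S}K_i\phi$ and $C_S\phi=\bigwedge_{k\ge1}E_S^k\phi$. SBA($S$) valid means in every run: each agent decides at most once; if $i\in S(r,m)$ performs $\mathtt{decide}_i(v)$ at time $m$ then every $j\in S(r,m)$ performs $\mathtt{decide}_j(v)$ at time $m$; and then some agent has initial preference $v$. *)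

From mathcomp Require Import all_boot.
Set Implicit Arguments. Unset Strict Implicit. Unset Printing Implicit Defensive.

Inductive action (V : Type) : Type := Noop | Decide (v : V).
Arguments Noop {V}.

(* An information exchange.  [lstate i] are the NON-crashed local states of
   agent i; the full local state space L_i is [option (lstate i)], with
   [None] the distinguished state [crashed].  [init i], [time i] read the
   init_i and time_i components.  [msg i] is M_i with [nomsg i] = bot. *)
Unset Implicit Arguments.
Record InfoExchange (n : nat) (V : Type) : Type := {
  lstate : 'I_n -> Type;
  msg : 'I_n -> Type;
  nomsg : forall i, msg i;
  init : forall i, lstate i -> V;
  time : forall i, lstate i -> nat;
  initial : forall i, lstate i -> Prop;
  mu : forall i, lstate i -> action V -> 'I_n -> msg i;
  delta : forall i, lstate i -> action V -> (forall j, msg j) -> lstate i;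
  initial_time : forall i s, initial i s -> time i s = 0;
  delta_init : forall i s a ms, init i (delta i s a ms) = init i s;
  delta_time : forall i s a ms, time i (delta i s a ms) = (time i s).+1
}.
Set Implicit Arguments.
Arguments init {n V} _ {i} _.
Arguments time {n V} _ {i} _.
Arguments initial {n V} _ {i} _.
Arguments mu {n V} _ {i} _ _ _.
Arguments delta {n V} _ {i} _ _ _.
Arguments nomsg {n V} _ i.
Arguments lstate {n V} _ _.
Arguments msg {n V} _ _.

Section Runs.
Variables (n : nat) (V : Type) (E : InfoExchange n V) (t : nat).

Definition lst (i : 'I_n) : Type := option (lstate E i).

Definition protocol : Type := forall i : 'I_n, lst i -> action V.

(* An adversary of Crash_t: for each agent, either it never crashes (None),
   or it crashes in round k+1 (Some (k, J)): its round-(k+1) messages to the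
   agents in J are lost, its messages in later rounds are all lost, and its
   state from time k+1 on is [crashed].  Delta^r is the identity. *)
Record crash_adv : Type := {
  crash : 'I_n -> option (nat * {set 'I_n});
  crash_bound : #|[set i | isSome (crash i)]| <= t
}.

(* A run of I_{P,E,Crash_t} is determined by its adversary and its initial
   local states s_i in I_i. *)
Record run : Type := {
  adv : crash_adv;
  s0 : forall i, lstate E i;
  s0_initial : forall i, initial E (s0 i)
}.

(* state of agent with crash info c at time k+1 is overwritten by crashed *)
Definition crashed_after (c : option (nat * {set 'I_n})) (k : nat) : bool :=
  if c is Some (k0, _) then k0 <= k else false.

(* Delta^t(k, i, j, .) is the identity (rather than constantly bot) *)
Definition delivered (c : option (nat * {set 'I_n})) (k : nat) (j : 'I_n) : bool :=
  match c with
  | None => true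
  | Some (k0, J) => (k < k0) || ((k == k0) && (j \notin J))
  end.

Variable P : protocol.

Fixpoint gstate (r : run) (m : nat) : forall i, lst i :=
  match m with
  | 0 => fun i => Some (s0 r i)
  | k.+1 =>
    let st := gstate r k in
    fun j =>
      if crashed_after (crash (adv r) j) k then None else
      match st j with
      | None => None
      | Some sj =>
        Some (delta E sj (P (Some sj))
               (fun i => if delivered (crash (adv r) i) k j then
                           match st i with
                           | Some si => mu E si (P (Some si)) j
                           | None => nomsg E i
                           end
                         else nomsg E i))
      end
  end.

Definition formula : Type := run -> nat -> Prop.
Definition indexical : Type := run -> nat -> pred 'I_n.

Definition valid (phi : formula) : Prop := forall r m, phi r m.

Definition decides (i : 'I_n) (v : V) : formula :=
  fun r m => P (gstate r m i) = Decide v.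

Definition exists_val (v : V) : formula :=
  fun r _ => exists i, init E (s0 r i) = v.

Definition decides_set (S : indexical) (v : V) : formula :=
  fun r m => forall i, S r m i -> decides i v r m.

Definition Nset : indexical := fun r _ i => ~~ isSome (crash (adv r) i).

(* A(r,m): agents with no fault in rounds 1..m.  An agent crashing in round
   k+1 has its first fault in round k+1. *)
Definition Aset : indexical := fun r m i =>
  if crash (adv r) i is Some (k, _) then m <= k else true.

Definition Kn (i : 'I_n) (phi : formula) : formula :=
  fun r m => forall r' m', gstate r m i = gstate r' m' i -> phi r' m'.

Definition Ek (S : indexical) (phi : formula) : formula :=
  fun r m => forall i, S r m i -> Kn i phi r m.

(* Eiter S k phi = E_S^{k+1} phi *)
Fixpoint Eiter (S : indexical) (k : nat) (phi : formula) : formula :=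
  match k with
  | 0 => Ek S phi
  | k'.+1 => Ek S (Eiter S k' phi)
  end.

Definition Ck (S : indexical) (phi : formula) : formula :=
  fun r m => forall k, Eiter S k phi r m.

Definition SBA_valid (S : indexical) : Prop :=
  forall r : run,
    (forall i m1 m2 v1 v2, decides i v1 r m1 -> decides i v2 r m2 -> m1 = m2) /\
    (forall i v m, S r m i -> decides i v r m ->
       (forall j, S r m j -> decides j v r m) /\ exists_val v r m).

End Runs.

(* If some agent decides v at time m of a run r, consider the run r_m in which
   every agent that crashes only after time m is made nonfaulty instead.  Up to
   time m the two runs are indistinguishable, and the nonfaulty agents of r_m
   are exactly the agents of A(r, m).  Since crashed agents never decide, the
   deciding agent is in A(r, m), so SBA(N) in r_m forces every agent of A(r, m)
   to decide v at time m, and v to be some initial preference.  Hence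
   "somebody decides v" implies E_A of itself, because an agent's decision is a
   function of its local state; by induction it implies every E_A^k of the two
   target formulas. *)

From mathcomp Require Import all_boot.
From Stdlib Require Import FunctionalExtensionality.

Section CommonKnowledge.
Context {n t : nat} {V : Type} {E : InfoExchange n V} {P : protocol E}.

Lemma Kn_decides {i v} {r : run E t} {m} :
  decides P i v r m -> Kn P i (decides P i v) r m.
Proof. by rewrite /decides => dec_v r' m' <-. Qed.

Lemma Ck_induction {S : indexical E t} {phi psi : formula E t} :
  (forall r m, phi r m -> Ek P S phi r m) ->
  (forall r m, phi r m -> psi r m) ->
  forall r m, phi r m -> Ck P S psi r m.
Proof.
move=> phi_Ek phi_psi r m phi_rm k.
elim: k r m phi_rm => [|k IHk] r m phi_rm i Si r' m' same_i /=.
  exact/phi_psi/(phi_Ek r m phi_rm i Si).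
exact/IHk/(phi_Ek r m phi_rm i Si).
Qed.

End CommonKnowledge.

Section Truncation.
Context {n t : nat} {V : Type} {E : InfoExchange n V} {P : protocol E}.

(* [Some (k, J)] is a crash in round k+1; crashes after round m are dropped. *)
Definition crash_upto (m : nat) (c : option (nat * {set 'I_n})) :
    option (nat * {set 'I_n}) :=
  if c is Some (k, _) then if m <= k then None else c else None.

Lemma crashed_after_upto m c k :
  k < m -> crashed_after (crash_upto m c) k = crashed_after c k.
Proof.
move=> lt_km; case: c => [[k0 J]|] //=.
by case: (leqP m k0) => [le_mk0 | //]; rewrite leqNgt (leq_trans lt_km le_mk0).
Qed.

Lemma delivered_upto m c k j :
  k < m -> delivered (crash_upto m c) k j = delivered c k j.
Proof.
move=> lt_km; case: c => [[k0 J]|] //=.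
by case: (leqP m k0) => [le_mk0 | //]; rewrite (leq_trans lt_km le_mk0).
Qed.

Lemma crash_upto_bound (a : crash_adv n t) m :
  #|[set i | isSome (crash_upto m (crash a i))]| <= t.
Proof.
apply: leq_trans (crash_bound a); apply/subset_leq_card/subsetP => i.
by rewrite !inE; case: (crash a i) => [[k J]|] //=; case: (m <= k).
Qed.

Definition truncate_run (r : run E t) (m : nat) : run E t :=
  Build_run (Build_crash_adv (crash_upto_bound (adv r) m)) (s0_initial r).

Lemma gstate_truncate_run r m k :
  k <= m -> gstate P (truncate_run r m) k = gstate P r k.
Proof.
elim: k => [|k IHk] lt_km; first by [].
rewrite /= IHk; last exact: ltnW.
apply: functional_extensionality_dep => j.
rewrite crashed_after_upto //; case: crashed_after => //.
case: (gstate P r k j) => // sj; congr (Some (delta E sj _ _)).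
by apply: functional_extensionality_dep => i; rewrite delivered_upto.
Qed.

Lemma Nset_truncate_run r m m' : Nset (truncate_run r m) m' =1 Aset r m.
Proof.
move=> i; rewrite /Nset /Aset /=.
by case: (crash (adv r) i) => [[k J]|] //=; case: leqP.
Qed.

Lemma decides_truncate_run r m i v :
  decides P i v (truncate_run r m) m <-> decides P i v r m.
Proof. by rewrite /decides gstate_truncate_run. Qed.

Lemma decides_Aset {r : run E t} {m i v} :
  P i None = Noop -> decides P i v r m -> Aset r m i.
Proof.
rewrite /decides /Aset => crashed_noop; case: m => [|m] /=.
  by case: (crash (adv r) i) => [[]|].
case: (crash (adv r) i) => [[k J]|] //=.
by case: leqP => [_ | //]; rewrite crashed_noop.
Qed.

Lemma SBA_Nset_decides_Aset {r : run E t} {m i v} :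
  (forall j, P j None = Noop) -> SBA_valid P (@Nset n V E t) ->
  decides P i v r m -> decides_set P (@Aset n V E t) v r m /\ exists_val v r m.
Proof.
move=> crashed_noop /(_ (truncate_run r m)) [_ agreement] dec_i.
have Ai := decides_Aset (crashed_noop i) dec_i.
have [all_decide exists_v] := agreement i v m
  (etrans (Nset_truncate_run r m m i) Ai)
  (proj2 (decides_truncate_run r m i v) dec_i).
split=> [j Aj | //]; apply/decides_truncate_run/all_decide.
by rewrite Nset_truncate_run.
Qed.

End Truncation.

Theorem proposition6 (n t : nat) (V : Type) (E : InfoExchange n V)
    (P : protocol E) :
  t < n ->
  (forall i, P i None = Noop) ->
  @SBA_valid n V E t P (@Nset n V E t) ->
  forall (i : 'I_n) (v : V),
    @valid n V E t (fun r m => @decides n V E t P i v r m ->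
       @Ck n V E t P (@Aset n V E t) (@decides_set n V E t P (@Aset n V E t) v) r m)
    /\
    @valid n V E t (fun r m => @decides n V E t P i v r m ->
       @Ck n V E t P (@Aset n V E t) (@exists_val n V E t v) r m).
Proof.
move=> _ crashed_noop sba i v.
pose someone_decides : formula E t := fun r m => exists j, decides P j v r m.
have consequences r m : someone_decides r m ->
    decides_set P (@Aset n V E t) v r m /\ exists_val v r m.
  by case=> j /(SBA_Nset_decides_Aset crashed_noop sba).
have self_Ek r m :
    someone_decides r m -> Ek P (@Aset n V E t) someone_decides r m.
  move=> /consequences [all_decide _] j Aj r' m' same_j.
  by exists j; apply: (Kn_decides (all_decide j Aj)).
split=> r m dec_i; apply: (Ck_induction self_Ek); try by exists i.
  by move=> r' m' /consequences [].
by move=> r' m' /consequences [].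
Qed.
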